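(* (i) Let $A_1 = \begin{pmatrix} \frac{\sqrt{2}}{2} & 0 \\ 0 & \frac{\sqrt{2}}{2} \end{pmatrix}$ and $B_1 = \begin{pmatrix} 0 & x \\ y & 0 \end{pmatrix}$, where $x,y\in\mathbb{C}$ satisfy $|x|,|y| \leq \frac{\sqrt{2}}{2}$ and are not both zero. Then there exist $p_1, p_2\in \mathbb{C} \setminus \{0\}$ satisfying $|p_1|^2 + |p_2|^2 = 1$ such that the maximal singular value of the matrix $C_1 = p_1 A_1 + p_2 B_1$ is strictly greater than $\frac{\sqrt{2}}{2}$. (ii) Let $A_2=\begin{pmatrix} \frac{\sqrt{2}}{2} & 0 \\ 0 & 0 \end{pmatrix}$ and $B_2=\begin{pmatrix} 0 & \frac{\sqrt{2}}{2} \\ z & 0 \end{pmatrix}$, where $z\in\mathbb{C}$ satisfies $0<|z| \leq \frac{\sqrt{2}}{2}$. Then there exist $p_1, p_2\in \mathbb{C} \setminus \{0\}$ satisfying $|p_1|^2 + |p_2|^2 = 1$ such that the maximal singular value of the matrix $C_2= p_1 A_2 + p_2 B_2$ is strictly greater than $\frac{\sqrt{2}}{2}$.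
   Context: All matrices are $2\times 2$ complex matrices; the maximal singular value of a matrix $C$ is the square root of the largest eigenvalue of $C^\dagger C$. *)

From HB Require Import structures.
From mathcomp Require Import all_boot all_order all_algebra.
From mathcomp Require Import complex.
From mathcomp Require Import reals.
Set Implicit Arguments. Unset Strict Implicit. Unset Printing Implicit Defensive.
Import Order.TTheory GRing.Theory Num.Theory.
Local Open Scope ring_scope.

Definition mx2 (F : Type) (a b c d : F) : 'M[F]_2 :=
  \matrix_(i < 2, j < 2)
    (if (i : nat) == 0%N then (if (j : nat) == 0%N then a else b)
     else (if (j : nat) == 0%N then c else d)).

Definition adjmx (C : numClosedFieldType) (n : nat) (M : 'M[C]_n) : 'M[C]_n :=
  (map_mx Num.conj M)^T.

Definition is_max_singular_value (C : numClosedFieldType) (n : nat)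
    (M : 'M[C]_n) (s : C) : Prop :=
  exists lam : C,
    eigenvalue (adjmx M *m M) lam /\
    (forall mu : C, eigenvalue (adjmx M *m M) mu -> mu <= lam) /\
    s = sqrtC lam.

From HB Require Import structures.
From mathcomp Require Import all_boot all_order all_algebra.
From mathcomp Require Import complex.
From mathcomp Require Import reals.
From mathcomp Require Import ring.

(* The eigenvalues of [M^† M] are the roots of [mu^2 - |M|_F^2 mu + |det M|^2],
   which are real because [M^† M] is Hermitian; hence the maximal singular value
   of [M] exceeds [e >= 0] as soon as this polynomial is negative at [e^2].
   For (ii) its value at [e^2] is [-e^2 |z|^2 |p1|^2 |p2|^2], negative for every
   admissible pencil, so no upper bound on [|z|] is needed.  For (i) choose the
   phase of [p2] so that [p2^2 x y = |x y|]; with [rho = |p2|^2] the value becomes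
   [rho (rho (e^2 + |x y|)^2 - e^2 (|x| + |y|)^2)], which is negative for
   [rho = (|x| + |y|)^2 / (8 e^2)] because [|x|, |y| <= e]. *)

Set Implicit Arguments.
Unset Strict Implicit.
Unset Printing Implicit Defensive.

Import Order.TTheory GRing.Theory Num.Theory.
Local Open Scope ring_scope.

Lemma det_mx2x2 (R : comPzRingType) (M : 'M[R]_2) :
  \det M = M 0 0 * M 1 1 - M 0 1 * M 1 0.
Proof.
rewrite (expand_det_row _ 0) !big_ord_recl big_ord0 /cofactor !det_mx11 !mxE /=.
have -> : lift 0 0 = 1 :> 'I_2 by exact: val_inj.
have -> : lift 1 0 = 0 :> 'I_2 by exact: val_inj.
by rewrite expr0 expr1 addr0 mul1r mulN1r mulrN.
Qed.

Lemma mxtrace_mx2x2 (R : comPzRingType) (M : 'M[R]_2) : \tr M = M 0 0 + M 1 1.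
Proof.
rewrite /mxtrace !big_ord_recl big_ord0 addr0.
by have -> : lift 0 0 = 1 :> 'I_2 by exact: val_inj.
Qed.

Lemma eigenvalue_mx2x2 (F : fieldType) (H : 'M[F]_2) mu :
  eigenvalue H mu = (mu ^+ 2 - \tr H * mu + \det H == 0).
Proof.
transitivity (\det (mu%:M - H) == 0).
  apply/eigenvalueP/det0P => [[v Hv v_neq0] | [v v_neq0 Hv]]; exists v => //.
    by rewrite mulmxBr Hv mul_mx_scalar subrr.
  by apply/eqP; rewrite -mul_mx_scalar eq_sym -subr_eq0 -mulmxBr Hv.
by rewrite !det_mx2x2 mxtrace_mx2x2 !mxE /=; congr (_ == 0); ring.
Qed.

Lemma scale_mx2 (R : pzRingType) (k a b c d : R) :
  k *: mx2 a b c d = mx2 (k * a) (k * b) (k * c) (k * d).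
Proof. by apply/matrixP => i j; rewrite !mxE; do 2!case: ifP. Qed.

Lemma add_mx2 (V : nmodType) (a b c d a' b' c' d' : V) :
  mx2 a b c d + mx2 a' b' c' d' = mx2 (a + a') (b + b') (c + c') (d + d').
Proof. by apply/matrixP => i j; rewrite !mxE; do 2!case: ifP. Qed.

Section SingularValues.
Variable C : numClosedFieldType.

Lemma quadratic_max_root (T D q : C) :
  T \is Num.real -> 0 <= T ^+ 2 - 4 * D -> q \is Num.real ->
  q ^+ 2 - T * q + D < 0 ->
  exists lam, [/\ lam ^+ 2 - T * lam + D = 0,
    forall mu, mu ^+ 2 - T * mu + D = 0 -> mu <= lam & q < lam].
Proof.
move=> T_real disc_ge0 q_real q_neg.
set d := sqrtC (T ^+ 2 - 4 * D).
have d_ge0 : 0 <= d by rewrite sqrtC_ge0.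
have DE : D = (T ^+ 2 - d ^+ 2) / 4 by rewrite sqrtCK; field.
have factor mu : mu ^+ 2 - T * mu + D = (mu - (T + d) / 2) * (mu - (T - d) / 2).
  by rewrite DE; field.
have lam_real : (T + d) / 2 \is Num.real.
  by rewrite rpredM ?rpredD ?rpredV ?(ger0_real d_ge0) ?realn.
have roots_le : (T - d) / 2 <= (T + d) / 2.
  by rewrite -subr_ge0 (_ : (T + d) / 2 - (T - d) / 2 = d) //; field.
exists ((T + d) / 2); split.
- by rewrite factor subrr mul0r.
- move=> mu; rewrite factor => /eqP; rewrite mulf_eq0 !subr_eq0.
  by case/orP => /eqP ->.
- rewrite (real_ltNge q_real lam_real); apply/negP => lam_le_q.
  suff : 0 <= q ^+ 2 - T * q + D by rewrite (lt_geF q_neg).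
  by rewrite factor mulr_ge0 ?subr_ge0 // (le_trans roots_le).
Qed.

Lemma adjmx_mul_entry n (M : 'M[C]_n) i j :
  (adjmx M *m M) i j = \sum_k (M k i)^* * M k j.
Proof. by rewrite !mxE; apply: eq_bigr => k _; rewrite !mxE. Qed.

Lemma adjmx_mul_hermitian n (M : 'M[C]_n) :
  adjmx (adjmx M *m M) = adjmx M *m M.
Proof.
apply/matrixP => i j; rewrite [LHS]mxE [in LHS]mxE !adjmx_mul_entry rmorph_sum.
by apply: eq_bigr => k _; rewrite rmorphM /= conjCK mulrC.
Qed.

Lemma mxtrace_adjmx_mul n (M : 'M[C]_n) :
  \tr (adjmx M *m M) = \sum_i \sum_k `|M k i| ^+ 2.
Proof.
apply: eq_bigr => i _; rewrite adjmx_mul_entry.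
by apply: eq_bigr => k _; rewrite normCKC.
Qed.

Lemma det_adjmx_mul n (M : 'M[C]_n) : \det (adjmx M *m M) = `|\det M| ^+ 2.
Proof. by rewrite det_mulmx det_tr det_map_mx normCK mulrC. Qed.

Lemma hermitian_mx2x2_discr_ge0 (H : 'M[C]_2) :
  adjmx H = H -> 0 <= \tr H ^+ 2 - 4 * \det H.
Proof.
move=> H_herm.
have H_conj i j : H j i = (H i j)^* by rewrite -[in LHS]H_herm !mxE.
have H_diag_real i : H i i \is Num.real by rewrite CrealE -H_conj.
rewrite mxtrace_mx2x2 det_mx2x2 (H_conj 0 1).
rewrite (_ : _ - _ = (H 0 0 - H 1 1) ^+ 2 + 4 * (H 0 1 * (H 0 1)^*)); last by ring.
apply: addr_ge0; first by rewrite real_exprn_even_ge0 // rpredB.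
by rewrite mulr_ge0 ?ler0n ?mul_conjC_ge0.
Qed.

Lemma max_singular_value_gt (M : 'M[C]_2) (e : C) : 0 <= e ->
  e ^+ 4 - \tr (adjmx M *m M) * e ^+ 2 + \det (adjmx M *m M) < 0 ->
  exists s, is_max_singular_value M s /\ e < s.
Proof.
move=> e_ge0; rewrite (exprM e 2 2) => chi_neg.
have tr_real : \tr (adjmx M *m M) \is Num.real.
  rewrite ger0_real // mxtrace_adjmx_mul.
  by do 2!apply: sumr_ge0 => ? _; rewrite exprn_ge0.
have disc_ge0 := hermitian_mx2x2_discr_ge0 (adjmx_mul_hermitian M).
have [lam [lam_root lam_max e2_lt_lam]] :=
  quadratic_max_root tr_real disc_ge0 (ger0_real (exprn_ge0 2 e_ge0)) chi_neg.
have lam_ge0 : 0 <= lam by rewrite (le_trans _ (ltW e2_lt_lam)) ?exprn_ge0.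
exists (sqrtC lam); split; last by rewrite -(sqrCK e_ge0) ltr_sqrtC // nnegrE exprn_ge0.
exists lam; split; last split => //.
- by rewrite eigenvalue_mx2x2 lam_root.
- by move=> mu; rewrite eigenvalue_mx2x2 => /eqP; exact: lam_max.
Qed.

Lemma mx2_max_singular_value_gt (a b c d e : C) : 0 <= e ->
  e ^+ 4 - (`|a| ^+ 2 + `|b| ^+ 2 + `|c| ^+ 2 + `|d| ^+ 2) * e ^+ 2
    + `|a * d - b * c| ^+ 2 < 0 ->
  exists s, is_max_singular_value (mx2 a b c d) s /\ e < s.
Proof.
move=> e_ge0 chi_neg; apply: max_singular_value_gt => //.
suff -> : \tr (adjmx (mx2 a b c d) *m mx2 a b c d)
          = `|a| ^+ 2 + `|b| ^+ 2 + `|c| ^+ 2 + `|d| ^+ 2.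
  by rewrite det_adjmx_mul det_mx2x2 !mxE.
by rewrite mxtrace_adjmx_mul !big_ord_recl !big_ord0 !mxE /=; ring.
Qed.

Lemma exists_phase (z : C) : exists2 u : C, `|u| = 1 & u ^+ 2 * z = `|z|.
Proof.
have [-> | z_neq0] := eqVneq z 0; first by exists 1; rewrite ?normr1 ?mulr0 ?normr0.
exists (sqrtC (`|z| / z)); last by rewrite sqrtCK divfK.
apply/eqP; rewrite -(@pexpr_eq1 _ _ 2) // -normrX sqrtCK normf_div normr_id.
by rewrite divff // normr_eq0.
Qed.

Definition exists_pencil_max_singular_gt (A B : 'M[C]_2) (e : C) : Prop :=
  exists p1 p2 : C, [/\ p1 != 0, p2 != 0, `|p1| ^+ 2 + `|p2| ^+ 2 = 1 &
    exists s, is_max_singular_value (p1 *: A + p2 *: B) s /\ e < s].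

Lemma pencil_rank_one_antidiag (e z : C) : 0 < e -> z != 0 ->
  exists_pencil_max_singular_gt (mx2 e 0 0 0) (mx2 0 e z 0) e.
Proof.
move=> e_gt0 z_neq0; set p : C := sqrtC 2^-1.
have p_ge0 : 0 <= p by rewrite sqrtC_ge0 invr_ge0 ler0n.
have p_sqr : p ^+ 2 = 2^-1 by rewrite sqrtCK.
have p_neq0 : p != 0 by rewrite sqrtC_eq0 invr_eq0 pnatr_eq0.
exists p, p; split => //; first by rewrite ger0_norm // p_sqr; field.
rewrite !scale_mx2 add_mx2 !(mulr0, addr0, add0r).
apply: mx2_max_singular_value_gt; first exact: ltW.
rewrite mulr0 sub0r normrN normr0 !normrM (ger0_norm p_ge0) (ger0_norm (ltW e_gt0)).
rewrite !exprMn p_sqr [X in X < 0](_ : _ = - (e ^+ 2 * `|z| ^+ 2 / 4)); last by field.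
by rewrite oppr_lt0 divr_gt0 ?mulr_gt0 ?exprn_gt0 ?normr_gt0.
Qed.

Lemma scalar_antidiag_charpoly_neg (e s t rho : C) :
  0 < e -> 0 <= s <= e -> 0 <= t <= e -> 0 < rho -> 8 * e ^+ 2 * rho = (s + t) ^+ 2 ->
  e ^+ 4 - ((1 - rho) * e ^+ 2 + rho * s ^+ 2 + rho * t ^+ 2 + (1 - rho) * e ^+ 2) * e ^+ 2
    + ((1 - rho) * e ^+ 2 - rho * (s * t)) ^+ 2 < 0.
Proof.
move=> e_gt0 /andP[s_ge0 s_le] /andP[t_ge0 t_le] rho_gt0 rhoE.
rewrite [X in X < 0](_ : _ = rho * (rho * (e ^+ 2 + s * t) ^+ 2 - e ^+ 2 * (s + t) ^+ 2));
  last by ring.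
rewrite pmulr_rlt0 // subr_lt0.
have e2_ge0 : 0 <= e ^+ 2 by rewrite exprn_ge0 // ltW.
have st_ge0 : 0 <= s * t by rewrite mulr_ge0.
have sum_le : e ^+ 2 + s * t <= e ^+ 2 + e ^+ 2 by rewrite lerD2l expr2 ler_pM.
apply: (le_lt_trans (y := rho * (e ^+ 2 + e ^+ 2) ^+ 2)).
  by rewrite ler_pM2l // !expr2 ler_pM ?addr_ge0.
rewrite (_ : rho * _ = e ^+ 2 * (s + t) ^+ 2 / 2); last by rewrite -rhoE; field.
have pos : 0 < e ^+ 2 * (s + t) ^+ 2 by rewrite -rhoE !mulr_gt0 ?exprn_gt0.
by rewrite ltr_pdivrMr // ltr_pMr ?ltr1n.
Qed.

Lemma pencil_scalar_antidiag (e x y : C) :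
  0 < e -> `|x| <= e -> `|y| <= e -> ~ (x = 0 /\ y = 0) ->
  exists_pencil_max_singular_gt (mx2 e 0 0 e) (mx2 0 x y 0) e.
Proof.
move=> e_gt0 x_le y_le xy_neq0; have e_ge0 : 0 <= e := ltW e_gt0.
have e2_gt0 : 0 < 8 * e ^+ 2 by rewrite mulr_gt0 ?exprn_gt0.
set s : C := `|x| in x_le *; set t : C := `|y| in y_le *.
have [s_ge0 t_ge0] : 0 <= s /\ 0 <= t by rewrite !normr_ge0.
have st_gt0 : 0 < s + t.
  rewrite lt_def addr_ge0 // andbT paddr_eq0 // /s /t !normr_eq0.
  by apply/negP => /andP[/eqP x0 /eqP y0]; apply: xy_neq0.
have [rho rhoE] : exists rho : C, 8 * e ^+ 2 * rho = (s + t) ^+ 2.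
  by exists ((s + t) ^+ 2 / (8 * e ^+ 2)); rewrite mulrC divfK ?gt_eqF.
have rho_gt0 : 0 < rho by rewrite -(pmulr_rgt0 _ e2_gt0) rhoE exprn_gt0.
have rho_lt1 : rho < 1.
  rewrite -(ltr_pM2l e2_gt0) rhoE mulr1 (le_lt_trans (_ : _ <= (e + e) ^+ 2)) //.
    by rewrite !expr2 ler_pM ?addr_ge0 ?lerD.
  by rewrite (_ : (e + e) ^+ 2 = 4 * e ^+ 2) ?ltr_pM2r ?exprn_gt0 ?ltr_nat //; ring.
have [u u_norm u_phase] := exists_phase (x * y).
set c : C := sqrtC (1 - rho); set r : C := sqrtC rho.
have [c_ge0 r_ge0] : 0 <= c /\ 0 <= r by rewrite !sqrtC_ge0 subr_ge0 !ltW.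
have c_sqr : c ^+ 2 = 1 - rho by rewrite sqrtCK.
have r_sqr : r ^+ 2 = rho by rewrite sqrtCK.
exists c, (r * u); split.
- by rewrite sqrtC_eq0 gt_eqF // subr_gt0.
- have u_neq0 : u != 0 by rewrite -normr_eq0 u_norm oner_neq0.
  by rewrite mulf_neq0 // sqrtC_eq0 gt_eqF.
- by rewrite normrM u_norm mulr1 !ger0_norm // c_sqr r_sqr subrK.
rewrite !scale_mx2 add_mx2 !(mulr0, addr0, add0r).
apply: (mx2_max_singular_value_gt e_ge0).
set det := (X in _ + `|X| ^+ 2 < 0).
have detE : det = (1 - rho) * e ^+ 2 - rho * (s * t).
  by rewrite /det -c_sqr -r_sqr /s /t -normrM -u_phase; ring.
have det_real : det \is Num.real.
  by rewrite detE rpredB ?ger0_real ?mulr_ge0 ?exprn_ge0 ?subr_ge0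
    ?(ltW rho_lt1) ?(ltW rho_gt0).
rewrite (real_normK det_real) detE !normrM u_norm !mulr1.
rewrite (ger0_norm c_ge0) (ger0_norm r_ge0) (ger0_norm e_ge0) !exprMn c_sqr r_sqr.
by apply: scalar_antidiag_charpoly_neg; rewrite ?s_ge0 ?t_ge0.
Qed.

End SingularValues.

Theorem lemma10 (R : realType) :
  (* (i) *)
  (forall x y : R[i],
     `|x| <= sqrtC 2 / 2 -> `|y| <= sqrtC 2 / 2 -> ~ (x = 0 /\ y = 0) ->
     exists p1 p2 : R[i],
       [/\ p1 != 0, p2 != 0, `|p1| ^+ 2 + `|p2| ^+ 2 = 1 &
        exists s : R[i],
          is_max_singular_value
            (p1 *: mx2 (sqrtC 2 / 2) 0 0 (sqrtC 2 / 2) + p2 *: mx2 0 x y 0) s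
          /\ sqrtC 2 / 2 < s]) /\
  (* (ii) *)
  (forall z : R[i],
     0 < `|z| -> `|z| <= sqrtC 2 / 2 ->
     exists p1 p2 : R[i],
       [/\ p1 != 0, p2 != 0, `|p1| ^+ 2 + `|p2| ^+ 2 = 1 &
        exists s : R[i],
          is_max_singular_value
            (p1 *: mx2 (sqrtC 2 / 2) 0 0 0 + p2 *: mx2 0 (sqrtC 2 / 2) z 0) s
          /\ sqrtC 2 / 2 < s]).
Proof.
have e_gt0 : 0 < sqrtC 2 / 2 :> R[i] by rewrite divr_gt0 ?sqrtC_gt0 ?ltr0n.
split=> [x y x_le y_le xy_neq0 | z z_gt0 _].
- exact: pencil_scalar_antidiag.
- by apply: pencil_rank_one_antidiag; rewrite // -normr_gt0.
Qed.
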